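(* Let $A\in\mathbb{R}^{n\times n}$, $B\in\mathbb{R}^{n\times m}$, $N\geq 1$ an integer, $\Omega=\{x\in\mathbb{R}^n: Hx\leq h\}$ with $H\in\mathbb{R}^{n_h\times n}$, $h\in\mathbb{R}^{n_h}$, and $U=\{v\in\mathbb{R}^m: Gv\leq g\}$ with $G\in\mathbb{R}^{n_g\times m}$, $g\in\mathbb{R}^{n_g}$. Suppose $0\in\Omega$ and $0\in U$. For $k\geq 1$ let $$Q_k(\Omega,U)=\Big\{x\in\mathbb{R}^n:\ \exists\, u_1,\dots,u_k\in U \text{ with } A^k x+\sum_{i=0}^{k-1}A^{k-1-i}Bu_{k-i}\in\Omega\Big\},$$ and $\bar{Q}_N(\Omega,U)=\mathrm{co}\big(\bigcup_{k=1}^N Q_k(\Omega,U)\big)$. Set $\bar{n}=n+Nm$, $n_{\bar g}=n_h+Nn_g$ and $$\bar{G}=\begin{bmatrix} HA^N & HB & HAB & \cdots & HA^{N-1}B\\ 0 & G & 0 & \cdots & 0\\ 0 & 0 & G & \cdots & 0\\ \vdots & & & \ddots & \vdots\\ 0 & 0 & 0 & \cdots & G\end{bmatrix}\in\mathbb{R}^{n_{\bar g}\times\bar n},\quad \bar g=\begin{bmatrix}h\\ g\\ \vdots\\ g\end{bmatrix}\in\mathbb{R}^{n_{\bar g}},\quad \bar H=\begin{bmatrix}H & 0 & \cdots & 0\end{bmatrix}\in\mathbb{R}^{n_h\times\bar n}$$ (with $g$ repeated $N$ times in $\bar g$). If there exist a nonnegative (entrywise) matrix $T\in\mathbb{R}^{n_{\bar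 g}\times n_h}$ and a matrix $M\in\mathbb{R}^{\bar n\times\bar n}$ such that $$T\bar H=\bar G M,\qquad Th\leq \bar g,\qquad \begin{bmatrix}I & 0 & \cdots & 0\end{bmatrix}=\begin{bmatrix}I & 0&\cdots & 0\end{bmatrix}M$$ (where $\begin{bmatrix}I & 0 & \cdots & 0\end{bmatrix}\in\mathbb{R}^{n\times\bar n}$ with $I$ the $n\times n$ identity), then $\bar{Q}_N(\Omega,U)$ is a control invariant set for the system $x^+=Ax+Bu$ with input set $U$.
   Context: A set $C\subseteq\mathbb{R}^n$ is control invariant for $x^+=Ax+Bu$ with input constraint $u\in U$ if for every $x\in C$ there exists $u\in U$ with $Ax+Bu\in C$. Vector inequalities are componentwise; $\mathrm{co}$ denotes convex hull. *)

From mathcomp Require Import all_boot all_order all_algebra.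
Set Implicit Arguments. Unset Strict Implicit. Unset Printing Implicit Defensive.
Import Order.TTheory GRing.Theory Num.Theory.
Local Open Scope ring_scope.

Section Defs.
Variable R : realFieldType.

Definition vle (p : nat) (x y : 'cV[R]_p) : Prop := forall i, x i 0 <= y i 0.

Definition mx_nonneg (p q : nat) (T : 'M[R]_(p, q)) : Prop := forall i j, 0 <= T i j.

Definition polyh (n p : nat) (H : 'M[R]_(p, n)) (h : 'cV[R]_p) (x : 'cV[R]_n) : Prop :=
  vle (H *m x) h.

Definition conv (n : nat) (S : 'cV[R]_n -> Prop) (x : 'cV[R]_n) : Prop :=
  exists (k : nat) (l : 'I_k -> R) (p : 'I_k -> 'cV[R]_n),
    (forall i, 0 <= l i) /\ \sum_(i < k) l i = 1 /\ (forall i, S (p i)) /\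
    x = \sum_(i < k) l i *: p i.

Definition control_invariant (n m : nat) (A : 'M[R]_n) (B : 'M[R]_(n, m))
    (U : 'cV[R]_m -> Prop) (C : 'cV[R]_n -> Prop) : Prop :=
  forall x, C x -> exists u, U u /\ C (A *m x + B *m u).

(* Q_k(Omega,U): u_1..u_k encoded as u : nat -> 'cV_m, used at indices 1..k *)
Definition Qk (n m : nat) (A : 'M[R]_n) (B : 'M[R]_(n, m))
    (Omega : 'cV[R]_n -> Prop) (U : 'cV[R]_m -> Prop) (k : nat) (x : 'cV[R]_n) : Prop :=
  exists u : nat -> 'cV[R]_m,
    (forall i, (1 <= i <= k)%N -> U (u i)) /\
    Omega (A ^+ k *m x + \sum_(i < k) (A ^+ (k - 1 - i) *m B *m u (k - i)%N)).

Definition Qbar (n m : nat) (A : 'M[R]_n) (B : 'M[R]_(n, m))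
    (Omega : 'cV[R]_n -> Prop) (U : 'cV[R]_m -> Prop) (N : nat) : 'cV[R]_n -> Prop :=
  conv (fun x => exists k, (1 <= k <= N)%N /\ Qk A B Omega U k x).

End Defs.

Lemma sum_const_nat (N m : nat) : (\sum_(i < N) m = N * m)%N.
Proof. by rewrite sum_nat_const card_ord. Qed.

Section Blocks.
Variable R : realFieldType.
Variables (n m nh ng N : nat).
Variables (A : 'M[R]_n) (B : 'M[R]_(n, m)) (H : 'M[R]_(nh, n)) (h : 'cV[R]_nh)
          (G : 'M[R]_(ng, m)) (g : 'cV[R]_ng).

Definition Gbar : 'M[R]_(nh + N * ng, n + N * m) :=
  col_mx
    (row_mx (H *m A ^+ N)
       (castmx (erefl nh, sum_const_nat N m) (\mxrow_(i < N) (H *m A ^+ i *m B))))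
    (row_mx 0
       (castmx (sum_const_nat N ng, sum_const_nat N m) (@mxblock R N N (fun _ => ng) (fun _ => m)
          (fun i j => if i == j then G else 0)))).

Definition gbar : 'cV[R]_(nh + N * ng) :=
  col_mx h (castmx (sum_const_nat N ng, erefl 1%N) (\mxcol_(i < N) g)).

Definition Hbar : 'M[R]_(nh, n + N * m) := row_mx H 0.

Definition Ibar : 'M[R]_(n, n + N * m) := row_mx 1%:M 0.
End Blocks.

From mathcomp Require Import all_boot all_order all_algebra zify.
Import Order.TTheory GRing.Theory Num.Theory.
Local Open Scope ring_scope.
Set Implicit Arguments. Unset Strict Implicit.

(* Every point x of Omega lies in Q_N: the certificate (T, M) maps [x; 0] to
   a vector z = M [x; 0] whose first block is still x (Ibar = Ibar M) and which
   satisfies Gbar z <= T Hbar [x; 0] = T H x <= T h <= gbar by nonnegativity of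
   T; reading Gbar z <= gbar blockwise, the remaining N blocks of z are inputs
   in U steering x into Omega in N steps.  Shifting inputs shows that
   x in Q_(k+1) can be steered into Q_k, and Q_0 = Omega is contained in Q_N,
   so the union of Q_1, ..., Q_N is control invariant.  Finally, since the
   dynamics are linear and U is convex, convex combinations of admissible
   successors are admissible successors of convex combinations. *)

Lemma castmx_mulmx (R : pzSemiRingType) p p' q q' r (eq_p : p = p') (eq_q : q = q')
    (X : 'M[R]_(p, q)) (Y : 'M[R]_(q, r)) :
  castmx (eq_p, eq_q) X *m castmx (eq_q, erefl r) Y = castmx (eq_p, erefl r) (X *m Y).
Proof. by case: p' / eq_p; case: q' / eq_q; rewrite !castmx_id. Qed.

Section ComponentwiseOrder.
Variable R : realFieldType.

Lemma vle_trans p (a b c : 'cV[R]_p) : vle a b -> vle b c -> vle a c.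
Proof. by move=> le_ab le_bc i; apply: le_trans (le_ab i) (le_bc i). Qed.

Lemma vle_mul_nonneg p q (T : 'M[R]_(p, q)) (a b : 'cV[R]_q) :
  mx_nonneg T -> vle a b -> vle (T *m a) (T *m b).
Proof.
move=> T_ge0 le_ab i; rewrite !mxE; apply: ler_sum => j _.
by apply: ler_wpM2l; [apply: T_ge0 | apply: le_ab].
Qed.

Lemma vle_col_mx p q (a c : 'cV[R]_p) (b d : 'cV[R]_q) :
  vle (col_mx a b) (col_mx c d) -> vle a c /\ vle b d.
Proof.
move=> le_ab; split=> i.
  by have := le_ab (lshift q i); rewrite !col_mxEu.
by have := le_ab (rshift p i); rewrite !col_mxEd.
Qed.

Lemma vle_castmx p p' (e : p = p') (X Y : 'cV[R]_p) :
  vle (castmx (e, erefl 1%N) X) (castmx (e, erefl 1%N) Y) -> vle X Y.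
Proof. by case: p' / e; rewrite !castmx_id. Qed.

Lemma vle_submxcol k (p_ : 'I_k -> nat) (X Y : 'cV[R]_(\sum_i p_ i)) i :
  vle X Y -> vle (submxcol X i) (submxcol Y i).
Proof. by move=> le_XY r; rewrite !mxE; apply: le_XY. Qed.

Lemma polyh_conv n p (H : 'M[R]_(p, n)) (h : 'cV[R]_p) x :
  conv (polyh H h) x -> polyh H h x.
Proof.
move=> [k [l [y [l_ge0 [l_sum1 [Hy ->]]]]]] r.
rewrite mulmx_sumr summxE.
apply: (@le_trans _ _ (\sum_(i < k) l i * h r 0)).
  by apply: ler_sum => i _; rewrite -scalemxAr mxE ler_wpM2l // (Hy i r).
by rewrite -mulr_suml l_sum1 mul1r.
Qed.

End ComponentwiseOrder.

Section Reachability.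
Variables (R : realFieldType) (n m : nat) (A : 'M[R]_n) (B : 'M[R]_(n, m)).
Variables (Omega : 'cV[R]_n -> Prop) (U : 'cV[R]_m -> Prop).

Lemma control_invariant_conv (S : 'cV[R]_n -> Prop) :
  (forall u, conv U u -> U u) ->
  control_invariant A B U S -> control_invariant A B U (conv S).
Proof.
move=> convU invS x [k [l [y [l_ge0 [l_sum1 [Sy ->]]]]]].
have [u Hu] := fin_all_exists (fun i => invS _ (Sy i)).
exists (\sum_(i < k) l i *: u i); split.
  apply: convU; exists k, l, u; do !split=> //.
  by move=> i; case: (Hu i).
exists k, l, (fun i => A *m y i + B *m u i); do !split=> //.
  by move=> i; case: (Hu i).
rewrite !mulmx_sumr -big_split; apply: eq_bigr => i _.
by rewrite scalerDr !scalemxAr.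
Qed.

Lemma Qk0 x : Qk A B Omega U 0 x -> Omega x.
Proof. by move=> [u [_]]; rewrite expr0 mul1mx big_ord0 addr0. Qed.

Lemma QkS k x :
  Qk A B Omega U k.+1 x -> exists u, U u /\ Qk A B Omega U k (A *m x + B *m u).
Proof.
move=> [u [Uu Omega_u]]; exists (u k.+1); split; first by apply: Uu; rewrite leqnn.
exists u; split; first by move=> i /andP [i_ge1 i_le]; apply: Uu; rewrite i_ge1 /=; lia.
move: Omega_u; rewrite big_ord_recl subn0 subn1 /= exprSr -mulmxE.
rewrite mulmxDr mulmxA addrA [_ *m (B *m _)]mulmxA.
congr (Omega (_ + _)); apply: eq_bigr => i _ /=.
by rewrite /bump /= subSS; congr (A ^+ _ *m B *m _); lia.
Qed.

Lemma sum_reversed_inputs k (u : nat -> 'cV[R]_m) :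
  \sum_(i < k) A ^+ (k - 1 - i) *m B *m u (k - i)%N =
  \sum_(i < k) A ^+ i *m B *m u i.+1.
Proof.
rewrite (reindex_inj rev_ord_inj); apply: eq_bigr => -[i lt_ik] _ /=.
by have [-> ->] : (k - 1 - (k - i.+1) = i /\ k - (k - i.+1) = i.+1)%N by lia.
Qed.

Lemma Qk_of_inputs k x (u : 'I_k -> 'cV[R]_m) :
  (forall i, U (u i)) ->
  Omega (A ^+ k *m x + \sum_(i < k) A ^+ i *m B *m u i) -> Qk A B Omega U k x.
Proof.
case: k u => [|k] u Uu Omega_x.
  exists (fun=> 0); split; first by move=> i /andP [i_ge1 i_le0]; lia.
  by move: Omega_x; rewrite !big_ord0.
exists (fun j => u (inord j.-1)); split.
  by move=> j _; apply: Uu.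
have /= -> := sum_reversed_inputs k.+1 (fun j => u (inord j.-1)).
by under eq_bigr do rewrite inord_val.
Qed.

Lemma control_invariant_Qunion N :
  (0 < N)%N -> (forall x, Omega x -> Qk A B Omega U N x) ->
  control_invariant A B U (fun x => exists k, (1 <= k <= N)%N /\ Qk A B Omega U k x).
Proof.
move=> N_gt0 Omega_sub_QN x [k [/andP [k_ge1 k_leN] Qx]].
case: k k_ge1 k_leN Qx => [//|k] _ k_leN /QkS [u [Uu Qy]].
exists u; split=> //.
case: k k_leN Qy => [|k] k_leN Qy.
  by exists N; rewrite N_gt0 leqnn; split=> //; apply/Omega_sub_QN/Qk0.
by exists k.+1; split=> //; lia.
Qed.

End Reachability.

Definition col_block (R : realFieldType) (N m : nat) (w : 'cV[R]_(N * m)) (i : 'I_N) :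
  'cV[R]_m :=
  submxcol (castmx (esym (sum_const_nat N m), erefl 1%N) w) i.

Section HorizonCertificate.
Variables (R : realFieldType) (n m nh ng N : nat).
Variables (A : 'M[R]_n) (B : 'M[R]_(n, m)).
Variables (H : 'M[R]_(nh, n)) (h : 'cV[R]_nh) (G : 'M[R]_(ng, m)) (g : 'cV[R]_ng).

Lemma Gbar_col_mx_le x (w : 'cV[R]_(N * m)) :
  vle (Gbar N A B H G *m col_mx x w) (gbar N h g) ->
  polyh H h (A ^+ N *m x + \sum_(i < N) A ^+ i *m B *m col_block w i) /\
  forall i, polyh G g (col_block w i).
Proof.
rewrite /Gbar /gbar mul_col_mx !mul_row_col mul0mx add0r => /vle_col_mx [top bot].
set W := castmx (esym (sum_const_nat N m), erefl 1%N) w.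
have Ew : w = castmx (sum_const_nat N m, erefl 1%N) W by rewrite /W castmxKV.
rewrite Ew !castmx_mulmx in top bot; rewrite castmx_id in top.
rewrite /col_block -/W.
rewrite -[W]submxcolK mul_mxrow_mxcol in top.
move/vle_castmx: bot => bot; rewrite -[W]submxcolK mul_mxblock_mxrow in bot.
split.
  by rewrite /polyh mulmxDr mulmxA mulmx_sumr; under eq_bigr do rewrite !mulmxA.
move=> i r; have := vle_submxcol (i := i) bot r.
rewrite !mxcolK (bigD1 i) //= eqxx big1 ?addr0 //.
by move=> j /negbTE; rewrite eq_sym => ->; rewrite mul0mx.
Qed.

Variables (T : 'M[R]_(nh + N * ng, nh)) (M : 'M[R]_(n + N * m)).
Hypotheses (T_ge0 : mx_nonneg T) (THbar : T *m Hbar m N H = Gbar N A B H G *m M).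
Hypotheses (Th : vle (T *m h) (gbar N h g)) (Ibar_M : Ibar R n m N = Ibar R n m N *m M).

Lemma certificate_lift x :
  polyh H h x -> exists w, vle (Gbar N A B H G *m col_mx x w) (gbar N h g).
Proof.
move=> Omega_x; set z := M *m col_mx x 0.
have z_top : usubmx z = x.
  have := congr1 (mulmx^~ (col_mx x 0)) Ibar_M.
  rewrite -mulmxA -/z -[z]vsubmxK /Ibar !mul_row_col !mul0mx !addr0 !mul1mx.
  by rewrite col_mxKu => <-.
exists (dsubmx z); rewrite -z_top vsubmxK /z mulmxA -THbar -mulmxA.
rewrite /Hbar mul_row_col mul0mx addr0.
exact: vle_trans (vle_mul_nonneg T_ge0 Omega_x) Th.
Qed.

Lemma polyh_sub_Qk_horizon x :
  polyh H h x -> Qk A B (polyh H h) (polyh G g) N x.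
Proof.
move=> /certificate_lift [w /Gbar_col_mx_le [Omega_x U_w]].
exact: Qk_of_inputs U_w Omega_x.
Qed.

End HorizonCertificate.

Theorem theorem1 (R : realFieldType) (n m nh ng N : nat)
    (A : 'M[R]_n) (B : 'M[R]_(n, m))
    (H : 'M[R]_(nh, n)) (h : 'cV[R]_nh) (G : 'M[R]_(ng, m)) (g : 'cV[R]_ng) :
  (1 <= N)%N ->
  polyh H h 0 ->
  polyh G g 0 ->
  (exists (T : 'M[R]_(nh + N * ng, nh)) (M : 'M[R]_(n + N * m)),
      mx_nonneg T /\
      T *m Hbar m N H = Gbar N A B H G *m M /\
      vle (T *m h) (gbar N h g) /\
      Ibar R n m N = Ibar R n m N *m M) ->
  control_invariant A B (polyh G g) (Qbar A B (polyh H h) (polyh G g) N).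
Proof.
move=> N_gt0 _ _ [T [M [T_ge0 [THbar [Th Ibar_M]]]]].
apply: control_invariant_conv; first exact: polyh_conv.
apply: control_invariant_Qunion => //.
exact: polyh_sub_Qk_horizon T_ge0 THbar Th Ibar_M.
Qed.
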